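(* In the additive penalized estimation problem described in the context, suppose that for some $1\le j\le p$ the covariate $x^{(j)}$ is a scalar in $[0,1]$ and $\mathcal G_j$ is the bounded variation space $\mathcal V^m$ with $m=1$ or $m=2$ and semi-norm $\|g_j\|_{F,j}=\mathrm{TV}(g_j^{(m-1)})$. Then a minimizer $\hat g=\sum_{k=1}^p\hat g_k$ of $K_n$ (when one exists) can be chosen such that $\hat g_j$ is piecewise constant with jump points only in $\{X_i^{(j)}:i=1,\dots,n\}$ if $m=1$, or $\hat g_j$ is continuous and piecewise linear with break points only in $\{X_i^{(j)}:i=1,\dots,n\}$ if $m=2$.
   Context: Data $(Y_i,X_i)$, $i=1,\dots,n$. For $k=1,\dots,p$, $x^{(k)}$ is a sub-vector of coordinates of $x$, $\mathcal G_k$ is a vector space of functions of $x^{(k)}$ with semi-norm $\|\cdot\|_{F,k}$, $\mathcal G=\{\sum_kg_k(x^{(k)}):g_k\in\mathcal G_k\}$. $\|f\|_n^2=n^{-1}\sum_if(X_i)^2$, $\|Y-g\|_n^2=n^{-1}\sum_i\{Y_i-g(X_i)\}^2$. With positive constants $\rho_{nk},\lambda_{nk}$ and $A_0>1$, $K_n(g)=\|Y-g\|_n^2/2+A_0\sum_{k=1}^p(\rho_{nk}\|g_k\|_{F,k}+\lambda_{nk}\|g_k\|_n)$, minimized over $g\in\mathcal G$ and decompositions $g=\sum_kg_k$. Total variation: $\mathrm{TV}(f)=\sup\sum_{i=1}^k|f(z_i)-f(z_{i-1})|$ over partitions $0\le z_0<\dots<z_k\le1$. $\mathcal V^m$ is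 the set of $g:[0,1]\to\mathbb R$ such that $g^{(m-2)}$ is absolutely continuous if $m\ge2$ and $\|g\|_{L_1}+\mathrm{TV}(g^{(m-1)})<\infty$. *)

From HB Require Import structures.
From mathcomp Require Import all_boot all_order all_algebra.
From mathcomp Require Import all_classical all_reals all_analysis.
Set Implicit Arguments. Unset Strict Implicit. Unset Printing Implicit Defensive.
Import Order.TTheory GRing.Theory Num.Theory numFieldNormedType.Exports.
Local Open Scope classical_set_scope.
Local Open Scope ring_scope.

Section Defs.
Variable R : realType.

Definition coord_dep (d : nat) (I : {set 'I_d}) (g : ('I_d -> R) -> R) :=
  forall x y : 'I_d -> R, (forall c, c \in I -> x c = y c) -> g x = g y.

(* the univariate function t |-> g(t,...,t); when g depends only on the
   coordinate c, g x = univ g (x c) *)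
Definition univ (d : nat) (g : ('I_d -> R) -> R) : R -> R := fun t => g (fun _ => t).

Definition abs_cont01 (f : R -> R) :=
  forall e : R, 0 < e -> exists2 del : R, 0 < del &
    forall (K : nat) (a b : 'I_K -> R),
      (forall k, 0 <= a k /\ a k <= b k /\ b k <= 1) ->
      (forall k l, k != l -> b k <= a l \/ b l <= a k) ->
      \sum_(k < K) (b k - a k) < del ->
      \sum_(k < K) `|f (b k) - f (a k)| < e.

Definition deriv_version (f h : R -> R) :=
  forall x : R, 0 <= x <= 1 ->
    ((f x)%:E = (f 0)%:E + \int[@lebesgue_measure R]_(t in `[0%R, x]) (h t)%:E)%E.

(* TV(f') on [0,1]: the total variation of the derivative, taken over the
   versions of the a.e.-defined derivative (essential variation) *)
Definition TV_deriv (f : R -> R) : \bar R :=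
  ereal_inf [set total_variation 0 1 h | h in [set h | deriv_version f h]].

Definition L1_01 (f : R -> R) :=
  (@lebesgue_measure R).-integrable `[(0:R), 1] (EFin \o f).

Definition Vspace (m : nat) (f : R -> R) : Prop :=
  match m with
  | 1 => L1_01 f /\ (total_variation 0 1 f < +oo)%E
  | 2 => abs_cont01 f /\ L1_01 f /\ (TV_deriv f < +oo)%E
  | _ => False
  end.

Definition TVpen (m : nat) (f : R -> R) : R :=
  match m with
  | 1 => fine (total_variation 0 1 f)
  | 2 => fine (TV_deriv f)
  | _ => 0
  end.

Definition Gbv (d : nat) (c : 'I_d) (m : nat) : set (('I_d -> R) -> R) :=
  [set g | coord_dep [set c]%SET g /\ Vspace m (univ g)].

Definition emp_norm (n d : nat) (Xs : 'I_n -> 'I_d -> R) (f : ('I_d -> R) -> R) : R :=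
  Num.sqrt (n%:R^-1 * \sum_(i < n) (f (Xs i)) ^+ 2).

Definition emp_loss (n d : nat) (Y : 'I_n -> R) (Xs : 'I_n -> 'I_d -> R)
  (g : ('I_d -> R) -> R) : R :=
  n%:R^-1 * \sum_(i < n) (Y i - g (Xs i)) ^+ 2.

Definition Kn (n d p : nat) (Y : 'I_n -> R) (Xs : 'I_n -> 'I_d -> R)
  (N : 'I_p -> (('I_d -> R) -> R) -> R) (rho lam : 'I_p -> R) (A0 : R)
  (gt : 'I_p -> ('I_d -> R) -> R) : R :=
  emp_loss Y Xs (fun x => \sum_(k < p) gt k x) / 2
  + A0 * \sum_(k < p) (rho k * N k (gt k) + lam k * emp_norm Xs (gt k)).

Definition is_minimizer (n d p : nat) (Y : 'I_n -> R) (Xs : 'I_n -> 'I_d -> R)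
  (G : 'I_p -> set (('I_d -> R) -> R))
  (N : 'I_p -> (('I_d -> R) -> R) -> R) (rho lam : 'I_p -> R) (A0 : R)
  (gt : 'I_p -> ('I_d -> R) -> R) : Prop :=
  (forall k, G k (gt k)) /\
  forall gt' : 'I_p -> ('I_d -> R) -> R, (forall k, G k (gt' k)) ->
    Kn Y Xs N rho lam A0 gt <= Kn Y Xs N rho lam A0 gt'.

Definition pw_constant (S : set R) (f : R -> R) :=
  forall x y : R, 0 <= x <= 1 -> 0 <= y <= 1 ->
    (forall s, S s -> ~ (Num.min x y <= s <= Num.max x y)) -> f x = f y.

Definition pw_linear (S : set R) (f : R -> R) :=
  {within `[(0:R), 1], continuous f} /\
  forall a b : R, 0 <= a -> a <= b -> b <= 1 ->
    (forall s, S s -> ~ (a < s < b)) ->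
    exists c e : R, forall x, a <= x <= b -> f x = c + e * x.

Definition pw_shape (m : nat) (S : set R) (f : R -> R) : Prop :=
  match m with
  | 1 => pw_constant S f
  | 2 => pw_linear S f
  | _ => False
  end.

End Defs.

(* Only the values of the j-th component at the design points enter the loss and
   the empirical norms in K_n, so that component may be replaced by any function of
   V^m interpolating it at the sorted design points whose penalty TV(g^(m-1)) is
   not larger.
   For m = 1 take the step interpolant: its variation is the sum of the increments
   |g(x_(k+1)) - g(x_k)|, which is at most TV(g).
   For m = 2 take the piecewise linear interpolant: its derivative is the step
   function of chord slopes, whose variation is the sum of the jumps between
   consecutive slopes. Each slope is the average over [x_k, x_(k+1)) of a version h
   of g'; writing h = P - N with P, N nondecreasing (Jordan decomposition, P + N
   being the variation function of h), the averages of P and of N increase from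
   one interval to the next, and the jumps telescope to at most TV(h). *)

From mathcomp Require Import all_boot all_order all_algebra.
From mathcomp Require Import all_classical all_reals all_analysis.
From mathcomp Require Import measurable_realfun ring lra.
Set Implicit Arguments. Unset Strict Implicit. Unset Printing Implicit Defensive.
Import Order.TTheory GRing.Theory Num.Theory numFieldNormedType.Exports.
Local Open Scope classical_set_scope.
Local Open Scope ring_scope.

Local Notation TV := total_variation.

Section total_variation_lemmas.
Context {R : realType}.
Implicit Types (a b x : R) (f g : R -> R).

Lemma eq_in_variation a b f g s : {in `[a, b], f =1 g} ->
  itv_partition a b s -> variation a b f s = variation a b g s.
Proof.
move=> fg abs; rewrite /variation; apply: eq_big_nat => k /andP[_ ks] /=.
have fgE i : (i < (size s).+1)%N -> f (nth b (a :: s) i) = g (nth b (a :: s) i).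
  move=> si; apply: fg; rewrite in_itv /=.
  by rewrite (itv_partition_nth_ge si abs) (itv_partition_nth_le si abs).
by rewrite (fgE k.+1 ks) fgE // ltnS ltnW.
Qed.

Lemma eq_in_total_variation a b f g : {in `[a, b], f =1 g} -> TV a b f = TV a b g.
Proof.
move=> fg; rewrite /total_variation; congr ereal_sup.
apply/seteqP; split => _ [_ [s abs <-] <-].
  by exists (variation a b g s); [exact: variations_variation|rewrite (eq_in_variation fg)].
by exists (variation a b f s); [exact: variations_variation|rewrite (eq_in_variation fg)].
Qed.

Lemma total_variation_cst_in a b f x : a <= b ->
  (forall t, a <= t <= b -> f t = x) -> TV a b f = 0%E.
Proof.
move=> ab fx; rewrite (@eq_in_total_variation _ _ _ (cst x)).
  by rewrite nondecreasing_total_variation // subrr.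
by move=> t; rewrite in_itv => /fx.
Qed.

Lemma TV_deriv_ge0 (f : R -> R) : (0 <= TV_deriv f)%E.
Proof. by apply: le_ereal_inf_tmp => _ [h _ <-]; exact/total_variation_ge0/ler01. Qed.

Lemma total_variation_jump a b f x : a < b ->
  (forall t, a <= t < b -> f t = x) -> TV a b f = `|f b - x|%:E.
Proof.
move=> ab; wlog x_le_fb : f x / x <= f b => [wlog_le fx|fx].
  have [|fb_lt_x] := leP x (f b); first by move=> ?; exact: wlog_le.
  rewrite -total_variationN (wlog_le _ (- x)) /= ?lerN2 ?(ltW fb_lt_x) //.
    by rewrite -opprD normrN.
  by move=> t /fx ->.
have fE t : a <= t <= b -> f t = if t < b then x else f b.
  case/andP=> a_t tb; case: ltP => [tb'|bt]; first by rewrite fx ?a_t.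
  by rewrite (@le_anti _ _ t b) ?tb.
rewrite nondecreasing_total_variation ?(ltW ab) //.
  by rewrite (fx a) ?lexx ?ab // ger0_norm // subr_ge0.
move=> s t; rewrite !in_itv /= => /fE -> /fE -> st.
case: ltP => sb; case: ltP => tb //.
by have := lt_le_trans (le_lt_trans st tb) sb; rewrite ltxx.
Qed.

End total_variation_lemmas.

Section sorted_paths.
Context {disp : Order.disp_t} {T : porderType disp}.
Local Open Scope order_scope.

Lemma path_lt_head (a z : T) s : path <%O a s -> z \in s -> a < z.
Proof. by move/(order_path_min lt_trans)/allP; apply. Qed.

Lemma path_lt_head_le (a z : T) s : path <%O a s -> z \in a :: s -> a <= z.
Proof.
by move=> pas; rewrite inE => /predU1P[->//|/(path_lt_head pas)/ltW].
Qed.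

Lemma path_lt_le_last (a z : T) s : path <%O a s -> z \in a :: s -> z <= last a s.
Proof.
elim: s a z => [a z _|b s IH a z /= /andP[ab pbs]]; first by rewrite inE => /eqP ->.
rewrite in_cons => /predU1P[->|]; last exact: IH.
by apply/ltW/(lt_le_trans ab)/(IH b b pbs); rewrite mem_head.
Qed.

End sorted_paths.

Section step_interpolant.
Context {R : realType}.
Variable g : R -> R.

Fixpoint step_interp (a : R) (s : seq R) (t : R) : R :=
  if s is b :: s' then (if t < b then g a else step_interp b s' t) else g a.

Lemma step_interp_knot a s t : path <%R a s -> t \in a :: s ->
  step_interp a s t = g t.
Proof.
elim: s a => [a _|b s IH a /= /andP[ab pbs]]; first by rewrite inE => /eqP ->.
rewrite in_cons => /predU1P[->|tbs]; first by rewrite ab.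
by rewrite ltNge (path_lt_head_le pbs tbs) /= IH.
Qed.

Lemma step_interp_between a s x y : path <%R a s -> x <= y ->
  (forall z, z \in s -> ~ (x <= z <= y)) -> step_interp a s x = step_interp a s y.
Proof.
elim: s a => [//|b s IH a /= /andP[_ pbs]] xy nz.
have [yb|by_] := ltP y b; first by rewrite (le_lt_trans xy yb).
have bx : b < x.
  by rewrite ltNge; apply/negP => xb; apply: (nz b); rewrite ?mem_head ?xb.
rewrite ltNge (ltW bx) /=; apply: IH => // z zs.
by apply: nz; rewrite in_cons zs orbT.
Qed.

Lemma total_variation_step_interp a s u v : path <%R a s -> u <= a ->
  last a s <= v -> (TV u v (step_interp a s) <= TV a (last a s) g)%E.
Proof.
elim: s a u => [a u _ ua av|b s IH a u /= /andP[ab pbs] ua lv].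
  by rewrite (@total_variation_cst_in _ u v _ (g a)) ?total_variationxx ?(le_trans ua).
have bl : b <= last b s by apply: path_lt_le_last pbs (mem_head _ _).
have ub : u < b by apply: le_lt_trans ab.
rewrite (total_variationD _ (ltW ub) (le_trans bl lv)).
rewrite (total_variationD _ (ltW ab) bl); apply: leeD.
  rewrite (@total_variation_jump _ u b _ (g a)) //; last by move=> t /andP[_ ->].
  by rewrite ltxx step_interp_knot ?mem_head // total_variation_ge // ltW.
rewrite (@eq_in_total_variation _ b v _ (step_interp b s)); first exact: IH.
by move=> t; rewrite in_itv /= => /andP[bt _]; rewrite ltNge bt.
Qed.

Lemma step_interp_bound a s t : `|step_interp a s t| <= \sum_(x <- a :: s) `|g x|.
Proof.
elim: s a => [a|b s IH a] /=; first by rewrite big_seq1.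
rewrite big_cons; case: ifP => _; first by rewrite lerDl sumr_ge0.
by rewrite (le_trans (IH b)) // lerDr.
Qed.

Lemma measurable_step_interp a s : measurable_fun setT (step_interp a s).
Proof.
elim: s a => [a|b s IH a] /=; first exact: measurable_cst.
apply: measurable_fun_ifT => //.
by apply: measurable_fun_ltr => //; exact: measurable_cst.
Qed.

Lemma pw_constant_step_interp (S : set R) a s : path <%R a s ->
  (forall z, z \in s -> S z) -> pw_constant S (step_interp a s).
Proof.
move=> pas sS x y _ _ nS.
wlog xy : x y nS / x <= y => [wlog_le|].
  have [|yx] := leP x y; first exact: wlog_le.
  by apply/esym/wlog_le/ltW => // z /nS; rewrite minC maxC.
apply: step_interp_between => // z /sS /nS.
by rewrite (min_l xy) (max_r xy).
Qed.

End step_interpolant.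

Section interval_integrals.
Context {R : realType}.
Local Notation mu := (@lebesgue_measure R).

Lemma bounded_integrable_itv a b (D : set R) (f : R -> R) M :
  measurable D -> D `<=` `[a, b] -> measurable_fun D f ->
  (forall t, D t -> `|f t| <= M) -> mu.-integrable D (EFin \o f).
Proof.
move=> mD Dab mf fM; apply: measurable_bounded_integrable => //.
  apply: (@le_lt_trans _ _ (mu `[a, b]%classic)).
    by apply: le_measure => //; rewrite inE.
  by rewrite lebesgue_measure_itv /=; case: ifP => _; rewrite ?ltry.
exists M; split; first exact: num_real.
by move=> M' MM' t Dt; apply: le_trans (fM t Dt) (ltW MM').
Qed.

Lemma integral_itv_bndo_split (f : R -> R) u v w : u <= v -> v <= w ->
  measurable_fun setT f ->
  (\int[mu]_(t in `[u, w[) (f t)%:E =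
   \int[mu]_(t in `[u, v[) (f t)%:E + \int[mu]_(t in `[v, w[) (f t)%:E)%E.
Proof.
move=> uv vw mf; rewrite (@itv_bndbnd_setU _ _ _ (BLeft v)) ?bnd_simp //.
rewrite integral_setU //; first by apply/measurable_EFinP; apply: measurable_funS mf.
apply/disj_setPS => x [] /=; rewrite !in_itv /= => /andP[_ xv] /andP[vx _].
by move: (lt_le_trans xv vx); rewrite ltxx.
Qed.

Lemma integral_itv_bndo_cst (f : R -> R) u v x : u <= v ->
  (forall t, u <= t < v -> f t = x) ->
  (\int[mu]_(t in `[u, v[) (f t)%:E = (x * (v - u))%:E)%E.
Proof.
move=> uv fx; rewrite (eq_integral (cst x%:E)); last first.
  by move=> t; rewrite inE /= in_itv /= => /fx ->.
rewrite integral_cst // [X in (_ * X)%E]lebesgue_measure_itv /= lte_fin.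
case: ltP => [_|vu]; first by rewrite -EFinD -EFinM.
have -> : v = u by apply/le_anti; rewrite vu uv.
by rewrite subrr mulr0 mule0.
Qed.

End interval_integrals.

Section lipschitz.
Context {R : realType}.
Implicit Types (k : R) (f : R -> R).

Lemma klipschitz_le k f :
  (forall x y, x <= y -> `|f y - f x| <= k * (y - x)) -> k.-lipschitz f.
Proof.
move=> fk [x y] _ /=; have [xy|yx] := leP x y.
  by rewrite distrC (distrC x) (@ger0_norm _ (y - x)) ?subr_ge0 //; exact: fk.
rewrite (@ger0_norm _ (x - y)) ?subr_ge0 ?(ltW yx) //; exact/fk/ltW.
Qed.

Lemma klipschitz_continuous k f : k.-lipschitz f -> continuous f.
Proof.
move=> fk x; apply/cvgrPdist_le => e e0.
have k1 : 0 < `|k| + 1 by rewrite ltr_wpDl.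
apply/nbhs_ballP; exists (e / (`|k| + 1)) => /=; first by rewrite divr_gt0.
move=> t; rewrite /ball /= ltr_pdivlMr // => xt.
apply: (le_trans (fk (x, t) (conj I I))) => /=.
have kk := ler_norm k; have d0 := normr_ge0 (x - t).
move: `|x - t| `|k| xt kk d0 => dt nk; nra.
Qed.

Lemma klipschitz_abs_cont01 k f : k.-lipschitz f -> abs_cont01 f.
Proof.
move=> fk e e0; have k1 : 0 < `|k| + 1 by rewrite ltr_wpDl.
exists (e / (`|k| + 1)); first by rewrite divr_gt0.
move=> K a b ab _; rewrite ltr_pdivlMr // => abe.
apply: (@le_lt_trans _ _ (`|k| * \sum_(i < K) (b i - a i))).
  rewrite mulr_sumr; apply: ler_sum => i _.
  have [_ [abi _]] := ab i.
  apply: (le_trans (fk (b i, a i) (conj I I))) => /=.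
  by rewrite ger0_norm ?subr_ge0 // ler_wpM2r ?subr_ge0 ?ler_norm.
have : 0 <= \sum_(i < K) (b i - a i).
  by apply: sumr_ge0 => i _; have [_ [? _]] := ab i; rewrite subr_ge0.
move: (\sum_(i < K) _) abe => S; nra.
Qed.

Lemma klipschitz_L1_01 k f : k.-lipschitz f -> L1_01 f.
Proof.
move=> fk; apply: (@bounded_integrable_itv _ 0 1 _ _ (`|f 0| + `|k|)) => //.
  apply: measurable_funS (continuous_measurable_fun _) => //.
  exact: klipschitz_continuous fk.
move=> t; rewrite /= in_itv /= => /andP[t0 t1].
rewrite -[f t](subrK (f 0)) (le_trans (ler_normD _ _)) // addrC lerD2l.
apply: (le_trans (fk (t, 0) (conj I I))) => /=; rewrite subr0 ger0_norm //.
have := ler_norm k; have := normr_ge0 k; nra.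
Qed.

End lipschitz.

Section linear_interpolant.
Context {R : realType}.
Local Notation mu := (@lebesgue_measure R).
Variable g : R -> R.

Definition chord_slope (a b : R) := (g b - g a) / (b - a).

Definition chord (a b t : R) := g a + chord_slope a b * (t - a).

(* Beyond the extreme knots, [lin_interp] follows the first and the last chord. *)
Fixpoint lin_interp (a : R) (s : seq R) (t : R) : R :=
  match s with
  | [::] => g a
  | b :: s' => if s' is _ :: _ then (if t < b then chord a b t else lin_interp b s' t)
               else chord a b t
  end.

Fixpoint slope_step (a : R) (s : seq R) (t : R) : R :=
  match s with
  | [::] => 0
  | b :: s' => if s' is _ :: _ then (if t < b then chord_slope a b else slope_step b s' t)
               else chord_slope a b
  end.

Fixpoint slope_norm_sum (a : R) (s : seq R) : R :=
  if s is b :: s' then `|chord_slope a b| + slope_norm_sum b s' else 0.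

Fixpoint slope_jump_sum (a : R) (s : seq R) : R :=
  match s with
  | b :: (c :: _) as s' => `|chord_slope b c - chord_slope a b| + slope_jump_sum b s'
  | _ => 0
  end.

Lemma slope_jump_sumE a b c s : slope_jump_sum a [:: b, c & s] =
  `|chord_slope b c - chord_slope a b| + slope_jump_sum b (c :: s).
Proof. by []. Qed.

Lemma chord_left a b : chord a b a = g a.
Proof. by rewrite /chord subrr mulr0 addr0. Qed.

Lemma chord_right a b : a < b -> chord a b b = g b.
Proof. by move=> ab; rewrite /chord /chord_slope divfK ?subr_eq0 ?gt_eqF // addrC subrK. Qed.

Lemma chordB a b x y : chord a b y - chord a b x = chord_slope a b * (y - x).
Proof. by rewrite /chord; ring. Qed.

Lemma slope_norm_sum_ge0 a s : 0 <= slope_norm_sum a s.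
Proof. by elim: s a => [//|b s IH a] /=; rewrite addr_ge0. Qed.

Lemma slope_jump_sum_ge0 a s : 0 <= slope_jump_sum a s.
Proof. by elim: s a => [//|b [//|c s] IH a] /=; rewrite addr_ge0 // IH. Qed.

Lemma lin_interp_tail a b c s t : b <= t ->
  lin_interp a [:: b, c & s] t = lin_interp b (c :: s) t.
Proof. by move=> bt /=; rewrite ltNge bt. Qed.

Lemma lin_interp_knot a s t : path <%R a s -> t \in a :: s -> lin_interp a s t = g t.
Proof.
elim: s a => [a _|b [|c s] IH a pabs]; first by rewrite inE => /eqP ->.
  have /andP[ab _] := pabs.
  by rewrite !inE => /orP[/eqP ->|/eqP ->] /=; rewrite ?chord_left ?chord_right.
have /andP[ab pbs] : (a < b) && path <%R b (c :: s) := pabs.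
rewrite in_cons => /predU1P[->|tbs]; first by rewrite /= ab chord_left.
by rewrite lin_interp_tail ?(path_lt_head_le pbs tbs) // IH.
Qed.

Lemma lin_interp_head a b s t : path <%R a (b :: s) -> t <= b ->
  lin_interp a (b :: s) t = chord a b t.
Proof.
case: s => [//|c s] pabs; have /andP[ab pbs] : (a < b) && path <%R b (c :: s) := pabs.
rewrite le_eqVlt => /predU1P[->|tb]; last by rewrite /= tb.
by rewrite lin_interp_tail // lin_interp_knot ?mem_head // chord_right.
Qed.

Lemma lin_interp_lipschitz a s : path <%R a s ->
  (slope_norm_sum a s).-lipschitz (lin_interp a s).
Proof.
move=> pas; apply: klipschitz_le => x y xy.
elim: s a x y xy pas => [a x y _ _|b [|c s] IH a x y xy pabs].
- by rewrite /= subrr normr0 mul0r.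
- by rewrite /= chordB normrM addr0 (@ger0_norm _ (y - x)) ?subr_ge0.
have /andP[ab pbs] : (a < b) && path <%R b (c :: s) := pabs.
have yx0 : 0 <= y - x by rewrite subr_ge0.
have L0 := slope_norm_sum_ge0 b (c :: s).
rewrite [slope_norm_sum _ _]/= -/(slope_norm_sum b (c :: s)).
have [yb|by_] := leP y b.
  rewrite !lin_interp_head ?(le_trans xy yb) // chordB normrM (ger0_norm yx0).
  by rewrite ler_wpM2r // lerDl.
have [bx|xb] := leP b x.
  rewrite !lin_interp_tail ?(le_trans bx xy) //.
  by rewrite (le_trans (IH _ _ _ xy pbs)) // ler_wpM2r // lerDr.
set L := lin_interp a [:: b, c & s].
have LyE : L y - L b = lin_interp b (c :: s) y - lin_interp b (c :: s) b.
  by rewrite /L !lin_interp_tail ?lexx ?(ltW by_).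
have LxE : L b - L x = chord_slope a b * (b - x).
  by rewrite /L !(lin_interp_head pabs) ?lexx ?(ltW xb) // chordB.
have -> : L y - L x = (L y - L b) + (L b - L x) by rewrite addrA subrK.
rewrite LyE LxE (le_trans (ler_normD _ _)) //.
rewrite normrM (@ger0_norm _ (b - x)) ?subr_ge0 ?(ltW xb) //.
have := IH b b y (ltW by_) pbs; have := normr_ge0 (chord_slope a b); nra.
Qed.

Lemma lin_interp_affine a s u v : path <%R a s -> u <= v ->
  (forall z, z \in s -> ~ (u < z < v)) ->
  exists c e : R, forall x, u <= x <= v -> lin_interp a s x = c + e * x.
Proof.
elim: s a => [a _ _ _|b [|c s] IH a pabs uv nz].
- by exists (g a), 0 => x _; rewrite mul0r addr0.
- by exists (g a - chord_slope a b * a), (chord_slope a b) => x _; rewrite /= /chord; ring.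
have /andP[ab pbs] : (a < b) && path <%R b (c :: s) := pabs.
have [vb|bv] := leP v b.
  exists (g a - chord_slope a b * a), (chord_slope a b) => x /andP[_ xv].
  by rewrite lin_interp_head ?(le_trans xv vb) // /chord; ring.
have [bu|ub] := leP b u; last by exfalso; apply: (nz b); rewrite ?mem_head ?ub.
have [c' [e' affine]] := IH b pbs uv (fun z zs => nz z (mem_behead (s := [:: b, c & s]) zs)).
by exists c', e' => x /andP[ux xv]; rewrite lin_interp_tail ?(le_trans bu ux) ?affine ?ux.
Qed.

Lemma pw_linear_lin_interp (S : set R) a s : path <%R a s ->
  (forall z, z \in s -> S z) -> pw_linear S (lin_interp a s).
Proof.
move=> pas sS; split.
  exact/continuous_subspaceT/klipschitz_continuous/lin_interp_lipschitz.
by move=> u v _ uv _ nS; apply: lin_interp_affine => // z /sS /nS.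
Qed.

Lemma measurable_slope_step a s : measurable_fun setT (slope_step a s).
Proof.
elim: s a => [a|b [|c s] IH a]; [exact: measurable_cst..|].
apply: measurable_fun_ifT => //; last exact: IH.
by apply: measurable_fun_ltr => //; exact: measurable_cst.
Qed.

Lemma slope_step_head a b s t : t < b -> slope_step a (b :: s) t = chord_slope a b.
Proof. by case: s => [//|c s] /= ->. Qed.

Lemma slope_step_tail a b c s t : b <= t ->
  slope_step a [:: b, c & s] t = slope_step b (c :: s) t.
Proof. by move=> bt /=; rewrite ltNge bt. Qed.

Lemma integral_slope_step a s u v : path <%R a s -> u <= v ->
  (\int[mu]_(t in `[u, v[) (slope_step a s t)%:E =
    (lin_interp a s v - lin_interp a s u)%:E)%E.
Proof.
elim: s a u v => [a u v _ uv|b [|c s] IH a u v pabs uv].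
- by rewrite (@integral_itv_bndo_cst _ _ _ _ 0) // mul0r /= subrr.
- by rewrite (@integral_itv_bndo_cst _ _ _ _ (chord_slope a b)) //= chordB.
have /andP[ab pbs] : (a < b) && path <%R b (c :: s) := pabs.
have headE u' v' : u' <= v' -> v' <= b ->
    (\int[mu]_(t in `[u', v'[) (slope_step a [:: b, c & s] t)%:E =
     (lin_interp a [:: b, c & s] v' - lin_interp a [:: b, c & s] u')%:E)%E.
  move=> uv' vb; rewrite (@integral_itv_bndo_cst _ _ _ _ (chord_slope a b)) //.
    by rewrite !(lin_interp_head pabs) ?(le_trans uv' vb) // chordB.
  by move=> t /andP[_ tv]; rewrite slope_step_head // (lt_le_trans tv vb).
have tailE u' v' : b <= u' -> u' <= v' ->
    (\int[mu]_(t in `[u', v'[) (slope_step a [:: b, c & s] t)%:E =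
     (lin_interp a [:: b, c & s] v' - lin_interp a [:: b, c & s] u')%:E)%E.
  move=> bu uv'; rewrite !lin_interp_tail ?(le_trans bu uv') // -IH //.
  apply: eq_integral => t tin; rewrite slope_step_tail //.
  by move: tin; rewrite inE /= in_itv /= => /andP[/(le_trans bu)].
have [vb|bv] := leP v b; first exact: headE.
have [bu|ub] := leP b u; first exact: tailE.
rewrite (integral_itv_bndo_split (v := b)) ?(ltW ub) ?(ltW bv) //.
  by rewrite headE ?tailE ?(ltW ub) ?(ltW bv) // -EFinD; congr EFin; ring.
exact: measurable_slope_step.
Qed.

Lemma total_variation_slope_step a s u v : path <%R a s -> u <= v ->
  (TV u v (slope_step a s) <= (slope_jump_sum a s)%:E)%E.
Proof.
elim: s a u v => [a u v _ uv|b [|c s] IH a u v pabs uv].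
- by rewrite (@total_variation_cst_in _ u v _ 0).
- by rewrite (@total_variation_cst_in _ u v _ (chord_slope a b)).
have /andP[ab pbs] : (a < b) && path <%R b (c :: s) := pabs.
have J0 := slope_jump_sum_ge0 b (c :: s).
rewrite slope_jump_sumE; have [vb|bv] := ltP v b.
  rewrite (@total_variation_cst_in _ u v _ (chord_slope a b)) ?lee_fin ?addr_ge0 //.
  by move=> t /andP[_ tv]; rewrite slope_step_head // (le_lt_trans tv vb).
have [bu|ub] := leP b u.
  rewrite (@eq_in_total_variation _ u v _ (slope_step b (c :: s))); last first.
    by move=> t; rewrite in_itv => /andP[ut _]; rewrite slope_step_tail // (le_trans bu ut).
  by apply: (le_trans (IH _ _ _ pbs uv)); rewrite lee_fin lerDr.
rewrite (total_variationD _ (ltW ub) bv) EFinD; apply: leeD.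
  rewrite (@total_variation_jump _ u b _ (chord_slope a b)) //.
    by rewrite slope_step_tail // slope_step_head // (path_lt_head pbs (mem_head _ _)).
  by move=> t /andP[_ tb]; rewrite slope_step_head.
rewrite (@eq_in_total_variation _ b v _ (slope_step b (c :: s))); first exact: IH.
by move=> t; rewrite in_itv => /andP[bt _]; rewrite slope_step_tail.
Qed.

End linear_interpolant.

Section nondecreasing_on_interval.
Context {R : realType}.
Local Notation mu := (@lebesgue_measure R).

Definition itv_avg (f : R -> R) (u v : R) := (\int[mu]_(t in `[u, v[) f t) / (v - u).

Variables (a b : R) (f : R -> R).
Hypotheses (ab : a <= b) (f_nd : {in `[a, b] &, nondecreasing_fun f}).

Lemma nondecreasing_in_measurable : measurable_fun `[a, b] f.
Proof.
pose clamp t := Num.min (Num.max t a) b.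
have clamp_in t : a <= clamp t <= b.
  by rewrite /clamp le_min ge_min le_max lexx ab orbT lexx orbT.
apply: (@eq_measurable_fun _ _ _ _ _ (f \o clamp)).
  move=> t; rewrite inE /= in_itv /= => /andP[a_t tb].
  by rewrite /clamp max_l // min_l.
apply: nondecreasing_measurable => // x y xy /=.
apply: f_nd; rewrite ?in_itv ?clamp_in //.
exact: le_min2 (le_max2 xy (lexx a)) (lexx b).
Qed.

Lemma nondecreasing_in_bound t : a <= t <= b -> `|f t| <= `|f a| + `|f b|.
Proof.
case/andP=> a_t tb; have in_ab x : a <= x <= b -> x \in `[a, b] by rewrite in_itv.
have fat : f a <= f t by apply: f_nd; rewrite ?in_ab ?lexx ?a_t ?tb ?ab.
have ftb : f t <= f b by apply: f_nd; rewrite ?in_ab ?lexx ?a_t ?tb ?ab.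
have := ler_norm (f b); have := lerNnormlW (lexx `|f a|); rewrite ler_norml.
by have := normr_ge0 (f a); have := normr_ge0 (f b); lra.
Qed.

Lemma nondecreasing_in_integrable (D : set R) : measurable D -> D `<=` `[a, b] ->
  mu.-integrable D (EFin \o f).
Proof.
move=> mD Dab; apply: (@bounded_integrable_itv _ a b _ _ (`|f a| + `|f b|)) => //.
  exact: measurable_funS nondecreasing_in_measurable.
by move=> t /Dab; rewrite /= in_itv => /nondecreasing_in_bound.
Qed.

Lemma itv_avg_nondecreasing_in u v : a <= u -> u < v -> v <= b ->
  f u <= itv_avg f u v <= f v.
Proof.
move=> au uv vb; have uv0 : 0 < v - u by rewrite subr_gt0.
have uv_ab : `[u, v[ `<=` `[a, b].
  move=> t /=; rewrite !in_itv /= => /andP[ut tv].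
  by rewrite (le_trans au ut) (le_trans (ltW tv) vb).
have cstE x : \int[mu]_(t in `[u, v[) x = x * (v - u).
  by rewrite /Rintegral (@integral_itv_bndo_cst _ (cst x) u v x) ?(ltW uv).
have cst_int x : mu.-integrable `[u, v[ (EFin \o cst x).
  apply: (@bounded_integrable_itv _ u v _ _ `|x|) => //.
  by apply: subset_itvl; rewrite bnd_simp.
have f_int := nondecreasing_in_integrable (measurable_itv `[u, v[) uv_ab.
have in_ab t : u <= t <= v -> t \in `[a, b].
  by case/andP=> ut tv; rewrite in_itv /= (le_trans au ut) (le_trans tv vb).
rewrite /itv_avg ler_pdivlMr // ler_pdivrMr // -!cstE; apply/andP; split.
  apply: le_Rintegral => //; first exact: cst_int.
  move=> t; rewrite /= in_itv /= => /andP[ut tv].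
  by apply: f_nd => //; apply: in_ab; rewrite ?lexx ?ut ?(ltW tv) ?(ltW uv).
apply: le_Rintegral => //; first exact: cst_int.
move=> t; rewrite /= in_itv /= => /andP[ut tv].
by apply: f_nd; rewrite ?(ltW tv) //; apply: in_ab; rewrite ?lexx ?ut ?(ltW tv) ?(ltW uv).
Qed.

End nondecreasing_on_interval.

Section slope_jumps.
Context {R : realType}.
Variables (g P N : R -> R).
Hypotheses (P_nd : {in `[0, 1] &, nondecreasing_fun P})
  (N_nd : {in `[0, 1] &, nondecreasing_fun N}).
Hypothesis slopeE : forall u v, 0 <= u -> u < v -> v <= 1 ->
  chord_slope g u v = itv_avg P u v - itv_avg N u v.

Let avg_sum u v := itv_avg P u v + itv_avg N u v.

Let in01 (t : R) : 0 <= t <= 1 -> t \in `[0, 1]. Proof. by rewrite in_itv. Qed.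

Let avg_sum_bounds u v : 0 <= u -> u < v -> v <= 1 ->
  P u + N u <= avg_sum u v <= P v + N v.
Proof.
move=> u0 uv v1.
have /andP[Pu Pv] := itv_avg_nondecreasing_in ler01 P_nd u0 uv v1.
have /andP[Nu Nv] := itv_avg_nondecreasing_in ler01 N_nd u0 uv v1.
by rewrite /avg_sum; apply/andP; split; lra.
Qed.

(* Averages of a nondecreasing function increase from one interval to the next. *)
Let slope_jump_le a b c : 0 <= a -> a < b -> b < c -> c <= 1 ->
  `|chord_slope g b c - chord_slope g a b| <= avg_sum b c - avg_sum a b.
Proof.
move=> a0 ab bc c1; have b0 := le_trans a0 (ltW ab); have b1 := le_trans (ltW bc) c1.
have /andP[_ Pab] := itv_avg_nondecreasing_in ler01 P_nd a0 ab b1.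
have /andP[Pbc _] := itv_avg_nondecreasing_in ler01 P_nd b0 bc c1.
have /andP[_ Nab] := itv_avg_nondecreasing_in ler01 N_nd a0 ab b1.
have /andP[Nbc _] := itv_avg_nondecreasing_in ler01 N_nd b0 bc c1.
by rewrite /avg_sum !slopeE // ler_norml; apply/andP; split; lra.
Qed.

Let slope_jump_sum_avg_le a b s : path <%R a (b :: s) -> 0 <= a -> last b s <= 1 ->
  slope_jump_sum g a (b :: s) + avg_sum a b <= P (last b s) + N (last b s).
Proof.
elim: s a b => [|c s IH] a b pabs a0 l1.
  have /andP[ab _] := pabs; have /andP[_] := avg_sum_bounds a0 ab l1.
  by rewrite /= add0r.
have /andP[ab pbs] : (a < b) && path <%R b (c :: s) := pabs.
have bc := path_lt_head pbs (mem_head _ _).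
have c1 : c <= 1 by apply: le_trans l1; apply: path_lt_le_last pbs _; rewrite !inE eqxx orbT.
have := IH b c pbs (le_trans a0 (ltW ab)) l1; have := slope_jump_le a0 ab bc c1.
by rewrite slope_jump_sumE [last b _]/=; lra.
Qed.

Lemma slope_jump_sum_le_jordan a s : path <%R a s -> 0 <= a -> last a s <= 1 ->
  slope_jump_sum g a s <= (P 1 + N 1) - (P 0 + N 0).
Proof.
move=> pas a0 l1; have PN_nd u v : 0 <= u -> u <= v -> v <= 1 -> P u + N u <= P v + N v.
  move=> u0 uv v1; have u1 := le_trans uv v1; have v0 := le_trans u0 uv.
  by rewrite lerD // ?P_nd ?N_nd // in01 ?u0 ?v0.
case: s pas l1 => [_ _|b s pabs l1]; first by rewrite subr_ge0 PN_nd ?ler01.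
have ab := path_lt_head pabs (mem_head _ _).
have b1 : b <= 1 by apply: le_trans l1; apply: path_lt_le_last pabs _; rewrite !inE eqxx orbT.
have /andP[avg_ge _] := avg_sum_bounds a0 ab b1.
have := slope_jump_sum_avg_le pabs a0 l1; have := PN_nd _ _ (lexx 0) a0 (le_trans (ltW ab) b1).
have lb0 : 0 <= last b s by apply: le_trans a0 _; apply: path_lt_le_last pabs (mem_head _ _).
have := PN_nd _ _ lb0 l1 (lexx 1); lra.
Qed.

End slope_jumps.

Section derivative_version.
Context {R : realType}.
Local Notation mu := (@lebesgue_measure R).
Variables g h : R -> R.
Hypotheses (g_h : deriv_version g h) (h_bv : bounded_variation 0 1 h).

Let P := fine \o pos_tv 0 h.
Let N := fine \o neg_tv 0 h.

Let P_nd : {in `[0, 1] &, nondecreasing_fun P}.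
Proof. exact/fine_neg_tv_nondecreasing/bounded_variationN. Qed.

Let N_nd : {in `[0, 1] &, nondecreasing_fun N}.
Proof. exact: fine_neg_tv_nondecreasing. Qed.

Let hE : {in `[0, 1], h =1 P \- N}.
Proof. exact: bounded_variation_pos_neg_tvE. Qed.

Let PN_total_variation t : 0 <= t <= 1 -> P t + N t = fine (TV 0 t h).
Proof.
case/andP=> t0 t1; have : TV 0 t h \is a fin_num.
  exact/(bounded_variationP _ t0)/(bounded_variationl t0 t1 h_bv).
move/fineK; rewrite /P /N /= /pos_tv /neg_tv total_variationN => <-.
by rewrite -!EFinN -!EFinB -!EFinM /=; field.
Qed.

Let h_integrable (D : set R) : measurable D -> D `<=` `[0, 1] ->
  mu.-integrable D (EFin \o h).
Proof.
move=> mD D01.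
have iP := nondecreasing_in_integrable ler01 P_nd mD D01.
have iN := nondecreasing_in_integrable ler01 N_nd mD D01.
apply: (@eq_integrable _ _ _ mu D mD (fun t => (P t)%:E - (N t)%:E)%E).
  by move=> t; rewrite inE => /D01 t01; rewrite /= hE ?inE.
exact: integrableB.
Qed.

Let deriv_versionRE x : 0 <= x <= 1 -> g x = g 0 + \int[mu]_(t in `[0, x]) h t.
Proof.
move=> /[dup] x01 /andP[x0 x1]; have := g_h x01.
rewrite -[X in (_ + X)%E]fineK ?(integrable_fin_num _ (h_integrable _ _)) //.
  by rewrite -EFinD => -[].
by move=> t /=; rewrite !in_itv /= => /andP[-> /le_trans]; apply.
Qed.

Let deriv_version_sub x y : 0 <= x -> x <= y -> y <= 1 ->
  g y - g x = \int[mu]_(t in `[x, y[) h t.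
Proof.
move=> x0 xy y1; have y0 := le_trans x0 xy; have x1 := le_trans xy y1.
rewrite (@deriv_versionRE y) ?y0 ?y1 // (@deriv_versionRE x) ?x0 ?x1 //.
rewrite opprD addrACA subrr add0r.
rewrite (@Rintegral_itvB _ _ (BLeft 0) (BRight y) x) ?bnd_simp //; last first.
  by apply: h_integrable => // t /=; rewrite !in_itv /= => /andP[-> /le_trans]; apply.
rewrite Rintegral_itv_obnd_cbnd -?Rintegral_itv_bndo_bndc //.
  by apply: h_integrable => // t /=; rewrite !in_itv /= => /andP[xt /ltW ty];
    rewrite (le_trans x0 xt) (le_trans ty y1).
by apply: h_integrable => // t /=; rewrite !in_itv /= => /andP[xt ty];
  rewrite (le_trans x0 (ltW xt)) (le_trans ty y1).
Qed.

Let chord_slopeE u v : 0 <= u -> u < v -> v <= 1 ->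
  chord_slope g u v = itv_avg P u v - itv_avg N u v.
Proof.
move=> u0 uv v1; have uv01 : `[u, v[ `<=` `[0, 1].
  by move=> t /=; rewrite !in_itv /= => /andP[ut /ltW tv];
    rewrite (le_trans u0 ut) (le_trans tv v1).
have iP := nondecreasing_in_integrable ler01 P_nd (measurable_itv _) uv01.
have iN := nondecreasing_in_integrable ler01 N_nd (measurable_itv _) uv01.
rewrite /chord_slope /itv_avg -mulrBl deriv_version_sub ?(ltW uv) // -RintegralB //.
by congr (_ / _); apply: eq_Rintegral => t; rewrite inE => /uv01 t01; rewrite hE ?inE.
Qed.

Lemma slope_jump_sum_le_total_variation a s : path <%R a s -> 0 <= a ->
  last a s <= 1 -> slope_jump_sum g a s <= fine (TV 0 1 h).
Proof.
move=> pas a0 l1; have := slope_jump_sum_le_jordan P_nd N_nd chord_slopeE pas a0 l1.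
rewrite !PN_total_variation ?lexx ?ler01 // total_variationxx /=; lra.
Qed.

End derivative_version.

Section interpolants_in_Vspace.
Context {R : realType}.
Variables (g : R -> R) (a : R) (s : seq R).
Hypotheses (pas : path <%R a s) (a_ge0 : 0 <= a) (last_le1 : last a s <= 1).

Lemma Vspace1_step_interp : Vspace 1 g ->
  Vspace 1 (step_interp g a s) /\ TVpen 1 (step_interp g a s) <= TVpen 1 g.
Proof.
move=> [_ TVg_fin]; have al : a <= last a s := path_lt_le_last pas (mem_head _ _).
have TV_le : (TV 0 1 (step_interp g a s) <= TV 0 1 g)%E.
  apply: (le_trans (total_variation_step_interp g pas a_ge0 last_le1)).
  rewrite (total_variationD _ a_ge0 (le_trans al last_le1)) (total_variationD _ al last_le1).
  by rewrite addeC -addeA leeDl // adde_ge0 // total_variation_ge0.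
have TV_ge0 : (0 <= TV 0 1 (step_interp g a s))%E by exact/total_variation_ge0/ler01.
split; last by apply: fine_le; rewrite // ge0_fin_numE ?(le_lt_trans TV_le) ?(le_trans TV_ge0).
split; last exact: le_lt_trans TV_le TVg_fin.
apply: (@bounded_integrable_itv _ 0 1 _ _ (\sum_(x <- a :: s) `|g x|)) => //.
  exact: measurable_funS (measurable_step_interp g a s).
by move=> t _; exact: step_interp_bound.
Qed.

Lemma TV_deriv_lin_interp_le :
  (TV_deriv (lin_interp g a s) <= (slope_jump_sum g a s)%:E)%E.
Proof.
apply: ge_ereal_inf; exists (TV 0 1 (slope_step g a s)).
  exists (slope_step g a s) => // x /andP[x0 x1].
  rewrite -integral_itv_bndo_bndc; last first.
    by apply/measurable_EFinP; apply: measurable_funS (measurable_slope_step g a s).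
  by rewrite integral_slope_step // -EFinD; congr EFin; ring.
exact/total_variation_slope_step/ler01.
Qed.

Lemma slope_jump_sum_le_TV_deriv : ((slope_jump_sum g a s)%:E <= TV_deriv g)%E.
Proof.
apply: le_ereal_inf_tmp => _ [h g_h <-].
have [TVh_fin|] := ltP (TV 0 1 h) +oo%E; last by rewrite leye_eq => /eqP ->; exact: leey.
have TVh_fin_num : TV 0 1 h \is a fin_num.
  by rewrite ge0_fin_numE // total_variation_ge0 // ler01.
have h_bv : bounded_variation 0 1 h by apply/bounded_variationP => //; exact: ler01.
rewrite -(fineK TVh_fin_num) lee_fin.
exact (slope_jump_sum_le_total_variation g_h h_bv pas a_ge0 last_le1).
Qed.

Lemma Vspace2_lin_interp : Vspace 2 g ->
  Vspace 2 (lin_interp g a s) /\ TVpen 2 (lin_interp g a s) <= TVpen 2 g.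
Proof.
move=> [_ [_ TVg_fin]]; have lip := lin_interp_lipschitz g pas.
have up := TV_deriv_lin_interp_le; have low := slope_jump_sum_le_TV_deriv.
split; first split; [exact: klipschitz_abs_cont01 lip|split|].
- exact: klipschitz_L1_01 lip.
- by rewrite (le_lt_trans up) ?ltry.
apply: fine_le; last exact: le_trans up low.
  by rewrite ge0_fin_numE ?TV_deriv_ge0 ?(le_lt_trans up) ?ltry.
by rewrite ge0_fin_numE ?TV_deriv_ge0.
Qed.

End interpolants_in_Vspace.

Lemma Vspace_interpolant {R : realType} m (g : R -> R) (S : set R) a s :
  m = 1%N \/ m = 2%N -> path <%R a s -> 0 <= a -> last a s <= 1 ->
  (forall z, z \in s -> S z) -> Vspace m g ->
  exists F, [/\ Vspace m F, TVpen m F <= TVpen m g, {in a :: s, F =1 g}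
    & pw_shape m S F].
Proof.
move=> [->|->] pas a0 l1 sS gV.
  have [FV FTV] := Vspace1_step_interp pas a0 l1 gV.
  exists (step_interp g a s); split=> //; first by move=> t; exact: step_interp_knot.
  exact: pw_constant_step_interp.
have [FV FTV] := Vspace2_lin_interp pas a0 l1 gV.
exists (lin_interp g a s); split=> //; first by move=> t; exact: lin_interp_knot.
exact: pw_linear_lin_interp.
Qed.

Lemma sorted_knots {R : realType} (xs : seq R) : {in xs, forall x, 0 <= x <= 1} ->
  exists a s, [/\ path <%R a s, 0 <= a, last a s <= 1,
    {subset s <= xs} & {subset xs <= a :: s}].
Proof.
move=> xs01.
have ysE x : (x \in sort <=%R (undup xs)) = (x \in xs) by rewrite mem_sort mem_undup.
have : sorted <%R (sort <=%R (undup xs)) by rewrite sort_lt_sorted undup_uniq.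
case: (sort _ _) ysE => [|a s] ysE pas; first by exists 0, [::]; split => // x; rewrite -ysE.
have ys01 x : x \in a :: s -> 0 <= x <= 1 by rewrite ysE => /xs01.
have /andP[a0 _] := ys01 a (mem_head _ _); have /andP[_ l1] := ys01 _ (mem_last a s).
by exists a, s; split => // x; rewrite -ysE // in_cons => ->; rewrite orbT.
Qed.

Lemma is_minimizer_update {R : realType} n d p (Y : 'I_n -> R) (Xs : 'I_n -> 'I_d -> R)
    (G : 'I_p -> set (('I_d -> R) -> R)) (N : 'I_p -> (('I_d -> R) -> R) -> R)
    (rho lam : 'I_p -> R) A0 gt j (f : ('I_d -> R) -> R) :
  0 <= A0 -> 0 <= rho j -> is_minimizer Y Xs G N rho lam A0 gt ->
  G j f -> (forall i, f (Xs i) = gt j (Xs i)) -> N j f <= N j (gt j) ->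
  is_minimizer Y Xs G N rho lam A0 (fun k => if k == j then f else gt k).
Proof.
move=> A0_ge0 rho_ge0 [Ggt gt_min] Gf fX Nf.
have gtX k i : (if k == j then f else gt k) (Xs i) = gt k (Xs i).
  by case: eqP => [->|].
split=> [k|gt' Ggt']; first by case: eqP => [->|].
apply: le_trans (gt_min gt' Ggt'); rewrite /Kn /emp_loss /emp_norm.
under eq_bigr do under eq_bigr do rewrite gtX.
rewrite lerD2l ler_wpM2l // ler_sum // => k _.
under eq_bigr do rewrite gtX.
by rewrite lerD2r; case: eqP => [->|//]; rewrite ler_wpM2l.
Qed.

Unset Implicit Arguments.

Theorem proposition2 (R : realType) (n d p : nat)
  (Y : 'I_n -> R) (Xs : 'I_n -> 'I_d -> R)
  (I : 'I_p -> {set 'I_d})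
  (G : 'I_p -> set (('I_d -> R) -> R))
  (N : 'I_p -> (('I_d -> R) -> R) -> R)
  (rho lam : 'I_p -> R) (A0 : R) (j : 'I_p) (c : 'I_d) (m : nat) :
  (forall k, 0 < rho k) -> (forall k, 0 < lam k) -> 1 < A0 ->
  (* for k <> j: G_k is a vector space of functions of x^(k), N_k a semi-norm *)
  (forall k, k != j ->
     [/\ G k (fun _ => 0),
         (forall g h, G k g -> G k h -> G k (fun x => g x + h x)),
         (forall a g, G k g -> G k (fun x => a * g x))
       & (forall g, G k g -> coord_dep (I k) g)] /\
     [/\ (forall a g, G k g -> N k (fun x => a * g x) = `|a| * N k g),
         (forall g, G k g -> 0 <= N k g)
       & (forall g h, G k g -> G k h ->
            N k (fun x => g x + h x) <= N k g + N k h)]) ->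
  (* the j-th covariate is the scalar coordinate c, with values in [0,1] *)
  I j = [set c]%SET ->
  (forall i, 0 <= Xs i c <= 1) ->
  (m = 1%N \/ m = 2%N) ->
  G j = Gbv c m ->
  N j = (fun g => TVpen m (univ g)) ->
  (exists gt, is_minimizer Y Xs G N rho lam A0 gt) ->
  exists gt, is_minimizer Y Xs G N rho lam A0 gt /\
    pw_shape m [set Xs i c | i in [set: 'I_n]] (univ (gt j)).
Proof.
move=> rho_gt0 _ A0_gt1 _ _ X01 m12 Gj Nj [gt gt_min].
have [gtj_dep gtjV] : Gbv c m (gt j) by rewrite -Gj; exact: gt_min.1.
have gtjE x : gt j x = univ (gt j) (x c).
  by apply: gtj_dep => c'; rewrite inE => /eqP ->.
have data01 : {in [seq Xs i c | i <- enum 'I_n], forall x, 0 <= x <= 1}.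
  by move=> _ /mapP[i _ ->].
have [a [s [pas a0 l1 s_sub X_sub]]] := sorted_knots data01.
have sS z : z \in s -> [set Xs i c | i in [set: 'I_n]] z.
  by move=> /s_sub /mapP[i _ ->]; exists i.
have [F [FV FTV Fg Fshape]] := Vspace_interpolant m12 pas a0 l1 sS gtjV.
exists (fun k => if k == j then (fun x => F (x c)) else gt k); split; last by rewrite eqxx.
apply: is_minimizer_update => //.
- exact: le_trans ler01 (ltW A0_gt1).
- exact: ltW.
- by rewrite Gj; split => // x y xy; rewrite /= xy ?inE.
- by move=> i; rewrite gtjE Fg // X_sub // map_f ?mem_enum.
- by rewrite Nj.
Qed.
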